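(* Let $\mathbb{V}$ be a finite vocabulary, $\theta$ a language model, $k\ge 1$, $B\ge 1$, $T\ge 1$, a prefix $\mathbf{z}_{\mathrm{pre}}$ and a target suffix $\mathbf{z}_{\mathrm{suf}}\in\mathbb{V}^T$, as described in the context. Run top-$k$ constrained beam search ($k$-CBS) with beam width $B$, and let $C_T$ be its final candidate set. Let $F_{(B)}\subseteq C_T$ consist of the (at most) $B$ pairs of $C_T$ with the largest second coordinate (ties broken by a fixed deterministic rule). For $\mathsf{dist}\in\{\mathsf{Hamming},\mathsf{Levenshtein}\}$ and $\varepsilon\ge 0$ define $$\mathrm{LB}^{(B)}_{\varepsilon,\mathsf{dist}}=\sum_{(\mathbf{z}_{\mathrm{pre}}\Vert\mathbf{x},\,\ell)\in F_{(B)}\,:\,\mathbf{x}\in\mathbb{B}^{\mathsf{dist}}_{\varepsilon}(\mathbf{z}_{\mathrm{suf}})}\exp(\ell).$$ Then $\mathrm{LB}^{(B)}_{\varepsilon,\mathsf{dist}}\le p^{\mathsf{dist}}_{\mathbf{z},\varepsilon}$.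
   Context: Let $\mathbb{V}$ be a finite vocabulary containing a designated end-of-sequence token EOS. A language model $\theta$ assigns to every finite token sequence (history) $\mathbf{h}$ a probability distribution $\Pr_\theta(\cdot\mid\mathbf{h})$ on $\mathbb{V}$ with $\Pr_\theta(v\mid\mathbf{h})>0$ for all $v$. For an integer $k\ge1$ and a history $\mathbf{h}$, let $S(\mathbf{h})\subseteq\mathbb{V}$ be the set of $k$ tokens with the largest values of $\Pr_\theta(\cdot\mid\mathbf{h})$ (ties broken by a fixed deterministic rule). The top-$k$ decoding distribution is $\Pr_{\theta,\phi}(v\mid\mathbf{h})=\Pr_\theta(v\mid\mathbf{h})/\sum_{u\in S(\mathbf{h})}\Pr_\theta(u\mid\mathbf{h})$ for $v\in S(\mathbf{h})$ and $0$ otherwise. Fix a prefix $\mathbf{z}_{\mathrm{pre}}\in\mathbb{V}^L$ and a target suffix $\mathbf{z}_{\mathrm{suf}}\in\mathbb{V}^T$. For $\mathbf{x}\in\mathbb{V}^T$, $\Pr_{\theta,\phi}(\mathbf{x}\mid\mathbf{z}_{\mathrm{pre}})=\prod_{t=1}^T\Pr_{\theta,\phi}(x_t\mid\mathbf{z}_{\mathrm{pre}}\Vert x_{1:t-1})$ ($\Vert$ is concatenation). For $\mathbf{b},\mathbf{c}\in\mathbb{V}^T$, $\mathsf{Hamming}(\mathbf{b},\mathbf{c})=\#\{t: b_t\ne c_t\}$ and $\mathsf{Levenshtein}(\mathbf{b},\mathbf{c})$ is the minimum number of unit-cost single-token substitutions, insertions and deletions transforming $\mathbf{b}$ into $\mathbf{c}$.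 The $\varepsilon$-ball is $\mathbb{B}^{\mathsf{dist}}_{\varepsilon}(\mathbf{z}_{\mathrm{suf}})=\{\mathbf{v}\in\mathbb{V}^T:\mathsf{dist}(\mathbf{v},\mathbf{z}_{\mathrm{suf}})\le\varepsilon\}$, and the near-verbatim extraction probability is $p^{\mathsf{dist}}_{\mathbf{z},\varepsilon}=\sum_{\mathbf{v}\in\mathbb{B}^{\mathsf{dist}}_{\varepsilon}(\mathbf{z}_{\mathrm{suf}})}\Pr_{\theta,\phi}(\mathbf{v}\mid\mathbf{z}_{\mathrm{pre}})$. Top-$k$ constrained beam search ($k$-CBS) with beam width $B$: set $L_0=\{(\mathbf{z}_{\mathrm{pre}},0)\}$. For $t=1,\dots,T$: let $C_t=\{(\mathbf{h}\Vert v,\ \ell+\log\Pr_{\theta,\phi}(v\mid\mathbf{h})):(\mathbf{h},\ell)\in L_{t-1},\ v\in S(\mathbf{h})\}$. If $t=T$, output $F=C_T$. If $t<T$, delete from $C_t$ every pair whose history ends in EOS, and let $L_t$ be the (at most) $B$ pairs of $C_t$ with the largest second coordinate (deterministic tie-breaking). Every pair in $C_T$ has the form $(\mathbf{z}_{\mathrm{pre}}\Vert\mathbf{x},\ell)$ with $\mathbf{x}\in\mathbb{V}^T$. *)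

From HB Require Import structures.
From mathcomp Require Import all_boot all_order all_algebra.
From mathcomp Require Import boolp reals sequences exp.
Set Implicit Arguments. Unset Strict Implicit. Unset Printing Implicit Defensive.
Import Order.TTheory GRing.Theory Num.Theory.
Local Open Scope ring_scope.

Section LMDefs.
Variable V : finType.

Definition hamming (b c : seq V) : nat := count (fun p => p.1 != p.2) (zip b c).

Definition edit1 (s s' : seq V) : Prop :=
  exists p q a,
    [\/ s = p ++ a :: q /\ s' = p ++ q,
        s = p ++ q /\ s' = p ++ a :: q
      | exists b, s = p ++ a :: q /\ s' = p ++ b :: q ].

Inductive edits : nat -> seq V -> seq V -> Prop :=
| edits0 s : edits 0 s s
| editsS n s s' s'' : edit1 s s' -> edits n s' s'' -> edits n.+1 s s''.

Lemma edits_trans m n x y z : edits m x y -> edits n y z -> edits (m + n) x z.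
Proof.
elim=> [s|k s s' s'' e _ IH] // H.
by rewrite addSn; apply: editsS e (IH H).
Qed.

Lemma edits_del (b : seq V) : edits (size b) b [::].
Proof.
elim: b => [|a b IH] /=; first exact: edits0.
apply: editsS IH; exists [::], b, a; by apply: Or31.
Qed.

Lemma edits_ins (c s : seq V) : edits (size c) s (s ++ c).
Proof.
elim: c s => [|a c IH] s /=; first by rewrite cats0; exact: edits0.
apply: (editsS (s' := s ++ [:: a])).
  by exists s, [::], a; apply: Or32; rewrite cats0.
by have := IH (s ++ [:: a]); rewrite -catA.
Qed.

Lemma edits_exists (b c : seq V) : exists n, `[< edits n b c >].
Proof.
exists (size b + size c); apply/asboolP.
by have := edits_trans (edits_del b) (edits_ins c [::]).
Qed.

Definition levenshtein (b c : seq V) : nat := ex_minn (edits_exists b c).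

Variable R : realType.

Definition ends_in (EOS : V) (h : seq V) : bool := (h != [::]) && (last EOS h == EOS).

Definition topk_prob (theta : seq V -> V -> R) (S : seq V -> {set V})
    (h : seq V) (v : V) : R :=
  if v \in S h then theta h v / \sum_(u in S h) theta h u else 0.

Definition expand (theta : seq V -> V -> R) (S : seq V -> {set V})
    (L : seq (seq V * R)) : seq (seq V * R) :=
  flatten [seq [seq (rcons p.1 v, p.2 + ln (topk_prob theta S p.1 v)) | v <- enum (S p.1)]
          | p <- L].

(** Beam after t steps (t < T): L_t. [sel B C] keeps the (at most) B best pairs. *)
Definition beam (EOS : V) (theta : seq V -> V -> R) (S : seq V -> {set V})
    (sel : nat -> seq (seq V * R) -> seq (seq V * R)) (B : nat) (zpre : seq V)
    (t : nat) : seq (seq V * R) :=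
  iter t (fun L => sel B [seq p <- expand theta S L | ~~ ends_in EOS p.1]) [:: (zpre, 0)].

Definition final_cands (EOS : V) (theta : seq V -> V -> R) (S : seq V -> {set V})
    (sel : nat -> seq (seq V * R) -> seq (seq V * R)) (B T : nat) (zpre : seq V) :=
  expand theta S (beam EOS theta S sel B zpre T.-1).

Definition in_ball (d : seq V -> seq V -> nat) (T : nat) (zsuf : seq V) (eps : R)
    (v : seq V) : bool := (size v == T) && ((d v zsuf)%:R <= eps).

Definition LB (EOS : V) (theta : seq V -> V -> R) (S : seq V -> {set V})
    (sel : nat -> seq (seq V * R) -> seq (seq V * R)) (B T : nat) (zpre zsuf : seq V)
    (d : seq V -> seq V -> nat) (eps : R) : R :=
  \sum_(p <- sel B (final_cands EOS theta S sel B T zpre)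
        | (take (size zpre) p.1 == zpre) && in_ball d T zsuf eps (drop (size zpre) p.1))
     expR p.2.

Definition extract_prob (theta : seq V -> V -> R) (S : seq V -> {set V}) (T : nat)
    (zpre zsuf : seq V) (d : seq V -> seq V -> nat) (eps : R) : R :=
  \sum_(x : T.-tuple V | in_ball d T zsuf eps x)
     \prod_(t < T) topk_prob theta S (zpre ++ take t x) (tnth x t).

End LMDefs.

Definition is_topk (V : finType) (R : realType) (theta : seq V -> V -> R) (k : nat)
    (S : seq V -> {set V}) : Prop :=
  forall h, #|S h| = minn k #|V| /\
    (forall u v, u \in S h -> v \notin S h -> theta h v <= theta h u).

(** Specification of a "keep the (at most) n pairs with largest second coordinate"
    selection rule (any deterministic tie-breaking): the output is a sub-multiset of
    the input of size min(n, |input|) and no discarded pair beats a kept one. *)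
Definition is_top_selector (V : finType) (R : realType)
    (sel : nat -> seq (seq V * R) -> seq (seq V * R)) : Prop :=
  forall n C,
    (exists2 s, subseq s C & perm_eq (sel n C) s) /\
    size (sel n C) = minn n (size C) /\
    (forall p q, p \in sel n C -> q \in C -> q \notin sel n C -> q.2 <= p.2).

From HB Require Import structures.
From mathcomp Require Import all_boot all_order all_algebra.
From mathcomp Require Import boolp reals sequences exp.
Import Order.TTheory GRing.Theory Num.Theory.
Set Implicit Arguments. Unset Strict Implicit.
Local Open Scope ring_scope.

(** Every list produced by the search (beams, candidate sets, their selections
    and EOS-filterings) has pairwise distinct histories [zpre ++ x], each scored
    with [ln] of the top-k probability of its continuation [x]: expansion
    preserves this because [ln] turns the product of step probabilities into a
    sum, and selection and filtering only take sub-multisets. Hence [LB] sums the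
    probabilities of distinct suffixes in the ball, a subfamily of the
    nonnegative terms summed by [extract_prob]. *)

Lemma ler_sum_seq_uniq (I : finType) (R : numDomainType) (s : seq I) (F : I -> R) :
  uniq s -> (forall i, 0 <= F i) -> \sum_(i <- s) F i <= \sum_i F i.
Proof.
move=> s_uniq F_ge0; rewrite big_uniq // [leRHS](bigID [in s]) /=.
by rewrite lerDl sumr_ge0.
Qed.

Section FaithfulBeam.

Variables (V : finType) (R : realType) (theta : seq V -> V -> R) (S : seq V -> {set V}).
Hypothesis theta_pos : forall h v, 0 < theta h v.

Lemma topk_prob_gt0 h v : v \in S h -> 0 < topk_prob theta S h v.
Proof.
move=> vS; rewrite /topk_prob vS divr_gt0 // (bigD1 v) //= ltr_wpDr //.
by rewrite sumr_ge0 // => u _; apply/ltW.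
Qed.

Lemma topk_prob_ge0 h v : 0 <= topk_prob theta S h v.
Proof.
by case vS: (v \in S h); [apply/ltW/topk_prob_gt0 | rewrite /topk_prob vS].
Qed.

Variable zpre : seq V.

Definition suffix_prob n (x : n.-tuple V) : R :=
  \prod_(t < n) topk_prob theta S (zpre ++ take t x) (tnth x t).

Lemma suffix_prob_ge0 n (x : n.-tuple V) : 0 <= suffix_prob x.
Proof. by apply: prodr_ge0 => t _; apply: topk_prob_ge0. Qed.

Lemma suffix_prob_rcons n (x : n.-tuple V) v :
  suffix_prob [tuple of rcons x v] = suffix_prob x * topk_prob theta S (zpre ++ x) v.
Proof.
rewrite /suffix_prob big_ord_recr; congr (_ * _).
  apply: eq_bigr => t _; rewrite !(tnth_nth v) /= nth_rcons size_tuple ltn_ord.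
  by rewrite -cats1 takel_cat // size_tuple ltnW.
rewrite (tnth_nth v) /= nth_rcons size_tuple ltnn eqxx.
by rewrite -cats1 take_size_cat ?size_tuple.
Qed.

Definition faithful_beam n (L : seq (seq V * R)) : Prop :=
  uniq (map fst L) /\
  {in L, forall p, exists x : n.-tuple V, p.1 = zpre ++ x /\ expR p.2 = suffix_prob x}.

Lemma faithful_beam_expand n L :
  faithful_beam n L -> faithful_beam n.+1 (expand theta S L).
Proof.
move=> [L_uniq L_faithful]; split.
  have -> : map fst (expand theta S L) =
      [seq rcons h v | h <- map fst L, v <- enum (S h)].
    rewrite /expand map_flatten -!map_comp; congr flatten.
    by apply: eq_map => p /=; rewrite -map_comp.
  apply: (@allpairs_uniq_dep _ (fun _ => V)) => // [h _|]; first exact: enum_uniq.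
  by move=> [h v] [h' v'] _ _ /= /rcons_inj [-> ->].
move=> _ /allpairsPdep [p [v [pL vS ->]]] /=.
have [x [p_hist p_score]] := L_faithful p pL.
rewrite mem_enum p_hist in vS; rewrite p_hist.
exists [tuple of rcons x v]; split; first by rewrite /= rcons_cat.
by rewrite suffix_prob_rcons expRD p_score lnK // posrE topk_prob_gt0.
Qed.

Lemma faithful_beam_perm_subseq n L s L' :
  subseq s L -> perm_eq L' s -> faithful_beam n L -> faithful_beam n L'.
Proof.
move=> sL L's [L_uniq L_faithful]; split.
  by rewrite (perm_uniq (perm_map fst L's)) (subseq_uniq (map_subseq fst sL)).
by move=> p; rewrite (perm_mem L's) => /(mem_subseq sL) /L_faithful.
Qed.

Variables (sel : nat -> seq (seq V * R) -> seq (seq V * R)) (B : nat).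
Hypothesis sel_top : is_top_selector sel.

Lemma faithful_beam_sel n L : faithful_beam n L -> faithful_beam n (sel B L).
Proof.
by have [[s sL sel_s] _] := sel_top B L; apply: faithful_beam_perm_subseq sL sel_s.
Qed.

Lemma faithful_beam_filter n (P : pred (seq V * R)) L :
  faithful_beam n L -> faithful_beam n (filter P L).
Proof. exact/faithful_beam_perm_subseq/perm_refl/filter_subseq. Qed.

Lemma faithful_beam_beam EOS t : faithful_beam t (beam EOS theta S sel B zpre t).
Proof.
elim: t => [|t IH].
  split=> // _ /[1!inE] /eqP -> /=.
  by exists [tuple]; rewrite cats0 /suffix_prob big_ord0 expR0.
rewrite /beam iterS -/(beam EOS theta S sel B zpre t).
exact/faithful_beam_sel/faithful_beam_filter/faithful_beam_expand.
Qed.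

Lemma faithful_beam_final EOS T : (0 < T)%N ->
  faithful_beam T (sel B (final_cands EOS theta S sel B T zpre)).
Proof.
move=> T_gt0; apply/faithful_beam_sel.
by rewrite -(prednK T_gt0); apply/faithful_beam_expand/faithful_beam_beam.
Qed.

End FaithfulBeam.

Theorem theorem2 (V : finType) (EOS : V) (R : realType)
    (theta : seq V -> V -> R)
    (theta_pos : forall h v, 0 < theta h v)
    (theta_sum : forall h, \sum_(v : V) theta h v = 1)
    (k : nat) (k_ge1 : (1 <= k)%N)
    (S : seq V -> {set V}) (S_topk : is_topk theta k S)
    (B : nat) (B_ge1 : (1 <= B)%N)
    (sel : nat -> seq (seq V * R) -> seq (seq V * R)) (sel_top : is_top_selector sel)
    (T : nat) (T_ge1 : (1 <= T)%N)
    (zpre : seq V) (zsuf : T.-tuple V)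
    (eps : R) (eps_ge0 : 0 <= eps)
    (d : seq V -> seq V -> nat) (d_kind : d = @hamming V \/ d = @levenshtein V) :
  LB EOS theta S sel B T zpre zsuf d eps <= extract_prob theta S T zpre zsuf d eps.
Proof.
have [F_uniq F_faithful] := faithful_beam_final S theta_pos zpre B sel_top EOS T_ge1.
set F := sel B _ in F_uniq F_faithful.
pose suffix h : T.-tuple V := insubd zsuf (drop (size zpre) h).
pose g (x : T.-tuple V) := if in_ball d T zsuf eps x then suffix_prob theta S zpre x else 0.
have -> : LB EOS theta S sel B T zpre zsuf d eps = \sum_(h <- map fst F) g (suffix h).
  rewrite /LB -/F big_mkcond big_map; apply: eq_big_seq => _ /F_faithful [x [-> ->]].
  by rewrite /g /suffix take_size_cat ?drop_size_cat ?size_tuple ?valKd ?eqxx.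
have -> : extract_prob theta S T zpre zsuf d eps = \sum_x g x.
  by rewrite /extract_prob big_mkcond.
rewrite -(big_map suffix xpredT); apply: ler_sum_seq_uniq => [|x]; last first.
  by rewrite /g; case: ifP => // _; apply: suffix_prob_ge0.
rewrite map_inj_in_uniq // => h1 h2 /mapP [p /F_faithful [x [-> _]] ->].
move=> /mapP [q /F_faithful [y [-> _]] ->].
by rewrite /suffix !drop_size_cat ?valKd // => ->.
Qed.
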